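(* Let $\mathcal{H}$ be a real Hilbert space of dimension $d$, $G>0$, $\mathcal{G}=\{g\in\mathcal{H}:\|g\|\le G\}$, $\theta\in\mathcal{H}$ fixed, and $h:\mathbb{R}\to\mathbb{R}$ an even convex function that is increasing on $[0,\infty)$. Consider the one-round game \[ H=\min_{w\in\mathcal{H}}\max_{g\in\mathcal{G}}\ \langle w,g\rangle+h(\|\theta-g\|). \] If $d=1$, or if $d>1$, $h$ is twice differentiable, and $h''(x)>h'(x)/x$ for all $x>0$, then \[ H=\frac{h(\|\theta\|+G)+h(\|\theta\|-G)}{2}\qquad\text{and}\qquad w^*=\hat\theta\,\frac{h(\|\theta\|+G)-h(\|\theta\|-G)}{2G}, \] and any $g^*$ with $|\langle\theta,g^*\rangle|=G\|\theta\|$ and $\|g^*\|=G$ is a minimax play for the adversary.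
   Context: Write $H(w,g)=\langle w,g\rangle+h(\|\theta-g\|)$. $w^*=\arg\min_w\max_{g\in\mathcal{G}}H(w,g)$ is the minimax play of the player, and a minimax play of the adversary is a $g^*\in\arg\max_{g\in\mathcal{G}}H(w^*,g)$. $\hat\theta=\theta/\|\theta\|$ if $\theta\ne0$ and $\hat\theta=0$ otherwise. *)

(* R : realType, finite-dimensional real Hilbert space R^d = 'rV[R]_d *)
From HB Require Import structures.
From mathcomp Require Import all_boot all_order all_algebra.
From mathcomp Require Import all_classical all_reals all_analysis.
Set Implicit Arguments. Unset Strict Implicit. Unset Printing Implicit Defensive.
Import Order.TTheory GRing.Theory Num.Theory.
Local Open Scope ring_scope.

Definition dotv {R : realType} {d : nat} (u v : 'rV[R]_d) : R :=
  \sum_(i < d) u ord0 i * v ord0 i.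

Definition enorm {R : realType} {d : nat} (u : 'rV[R]_d) : R :=
  Num.sqrt (dotv u u).

Definition unit_dir {R : realType} {d : nat} (t : 'rV[R]_d) : 'rV[R]_d :=
  if t == 0 then 0 else (enorm t)^-1 *: t.

Definition game {R : realType} {d : nat} (h : R -> R) (theta w g : 'rV[R]_d) : R :=
  dotv w g + h (enorm (theta - g)).

Definition even_fun {R : realType} (h : R -> R) : Prop := forall x, h (- x) = h x.

Definition convex_fun {R : realType} (h : R -> R) : Prop :=
  forall x y t : R, 0 <= t -> t <= 1 ->
    h (t * x + (1 - t) * y) <= t * h x + (1 - t) * h y.

Definition increasing_on_nonneg {R : realType} (h : R -> R) : Prop :=
  forall x y : R, 0 <= x -> x < y -> h x < h y.

From HB Require Import structures.
From mathcomp Require Import all_boot all_order all_algebra.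
From mathcomp Require Import all_classical all_reals all_analysis.
From mathcomp Require Import ring lra.
Import Order.TTheory GRing.Theory Num.Theory.
Local Open Scope ring_scope.

(* Write t = ||theta||, w* = c theta^ and a = <theta^, g>.  Then
   H(w*, g) = c a + h(||theta - g||) with ||theta - g||^2 <= t^2 - 2 t a + G^2,
   and H(w*, +-G theta^) = V := (h(t + G) + h(t - G))/2.
   For d = 1, c a + h(t - a) <= V is convexity of h on [t - G, t + G].  For
   d > 1, h'' > h'/x says that s |-> h(sqrt s) is convex, so, h being
   increasing, H(w*, g) <= c a + h(sqrt(t^2 - 2 t a + G^2)), a convex function
   of a that is at most its value V at the endpoints a = +-G.
   Conversely let w <> w*.  If w - w* has a component along theta^, one of the
   plays +-G theta^ gains against w.  Otherwise the play on the sphere at height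
   a = G - e, tilted towards w - w*, gains order sqrt e through <w - w*, g> and
   loses only order e through c a and h, which convexity makes locally
   Lipschitz. *)

Section ConvexIncreasing.
Context {R : realType} {h : R -> R}.

Lemma even_fun_normr : even_fun h -> forall x, h `|x| = h x.
Proof.
move=> heven x; have [x_ge0|x_lt0] := lerP 0 x; first by rewrite ger0_norm.
by rewrite ltr0_norm // heven.
Qed.

Lemma increasing_on_nonneg_le : increasing_on_nonneg h ->
  forall x y, 0 <= x -> x <= y -> h x <= h y.
Proof.
move=> hinc x y x_ge0; rewrite le_eqVlt => /predU1P[-> //|xy].
exact/ltW/hinc.
Qed.

Lemma convex_fun_le_chord : convex_fun h -> forall p q x, p < q -> p <= x -> x <= q ->
  h x <= ((q - x) * h p + (x - p) * h q) / (q - p).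
Proof.
move=> hconv p q x pq px xq.
have qp_neq0 : q - p != 0 by rewrite subr_eq0 gt_eqF.
set l := (q - x) / (q - p).
have l_ge0 : 0 <= l by rewrite divr_ge0 // subr_ge0 // ltW.
have l_le1 : l <= 1 by rewrite ler_pdivrMr ?subr_gt0 // mul1r lerD2l lerN2.
have := hconv p q l l_ge0 l_le1.
have -> : l * p + (1 - l) * q = x by rewrite /l; field.
by have -> : ((q - x) * h p + (x - p) * h q) / (q - p) = l * h p + (1 - l) * h q
  by rewrite /l; field.
Qed.

Lemma convex_fun_ge_secant : convex_fun h -> increasing_on_nonneg h ->
  forall x y, 0 <= x -> 0 <= y -> h x - (h (x + 1) - h x) * `|x - y| <= h y.
Proof.
move=> hconv hinc x y x_ge0 y_ge0.
have hmono := increasing_on_nonneg_le hinc.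
have [yx|xy] := lerP y x; last first.
  apply: le_trans (hmono _ _ x_ge0 (ltW xy)).
  have hx1 : h x <= h (x + 1) by apply: hmono; rewrite ?lerDl.
  by rewrite gerDl oppr_le0 mulr_ge0 // subr_ge0 // ltW.
have x_lt : x < x + 1 by rewrite ltrDl.
have := @convex_fun_le_chord hconv y (x + 1) x (le_lt_trans yx x_lt) yx (ltW x_lt).
rewrite ler_pdivlMr ?subr_gt0 ?ltr_pwDr //.
nra.
Qed.

End ConvexIncreasing.

Lemma sqrt_gap_dominates_linear (R : realType) (G n K : R) : 0 < G -> 0 < n ->
  exists2 e, 0 < e <= G & K * e < Num.sqrt (G ^+ 2 - (G - e) ^+ 2) * n.
Proof.
move=> G_gt0 n_gt0; set N := n ^+ 2 + K ^+ 2.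
have N_gt0 : 0 < N by rewrite /N; nra.
set e := G * n ^+ 2 / N.
have eN : e * N = G * n ^+ 2 by rewrite /e mulfVK ?gt_eqF.
have e_gt0 : 0 < e by rewrite divr_gt0 ?mulr_gt0 ?exprn_gt0.
have e_leG : e <= G by rewrite ler_pdivrMr // ler_pM2l // lerDl sqr_ge0.
exists e; first by rewrite e_gt0.
clearbody e; rewrite (_ : _ - _ = e * (2 * G - e)); last by ring.
set b := Num.sqrt _.
have b_ge0 : 0 <= b := sqrtr_ge0 _.
have b2 : b ^+ 2 = e * (2 * G - e) by rewrite sqr_sqrtr // mulr_ge0 //; lra.
have : 0 < (b * n) ^+ 2 - (K * e) ^+ 2.
  rewrite (_ : _ - _ = e * (G * n ^+ 2)); first by rewrite !mulr_gt0 // exprn_gt0.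
  rewrite exprMn b2 (_ : _ - _ = e * (2 * (G * n ^+ 2) - e * N)); last by rewrite /N; ring.
  by rewrite eN; ring.
have := mulr_ge0 b_ge0 (ltW n_gt0); nra.
Qed.

Section SecondDerivativeCondition.
Context {R : realType} {h : R -> R}.
Hypotheses (dh : forall x : R, derivable h x 1)
  (ddh : forall x : R, derivable (derive1 h) x 1)
  (dh_div_lt : forall x : R, 0 < x -> derive1 h x / x < derive1 (derive1 h) x).

Lemma derive1_div_lt p q : 0 < p -> p < q -> derive1 h p / p < derive1 h q / q.
Proof.
move=> p_gt0 pq.
pose m x := derive1 h x * x^-1.
pose dm x := derive1 h x * (- x ^- 2) + x^-1 * derive1 (derive1 h) x.
have Dm (x : R) : 0 < x -> is_derive x 1 m (dm x).
  move=> x_gt0.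
  have D1 : is_derive x 1 (derive1 h) (derive1 (derive1 h) x).
    by rewrite derive1E; apply: derivableP.
  have D2 : is_derive x (1:R) (fun y : R => y^-1) (- x ^- 2 *: (1:R)).
    by apply: (@is_deriveV _ id); rewrite gt_eqF.
  have D3 := is_deriveM D1 D2.
  by apply: is_derive_eq; rewrite /dm -[- x ^- 2 in RHS]mulr1.
have [r rpq mqp] : exists2 r, r \in `]p, q[ & m q - m p = dm r * (q - p).
  apply: MVT => //.
    by move=> x; rewrite in_itv /= => /andP[px _]; apply/Dm/(lt_trans p_gt0).
  apply: derivable_within_continuous => x; rewrite in_itv /= => /andP[px _].
  by case: (Dm x (lt_le_trans p_gt0 px)).
move: rpq; rewrite in_itv /= => /andP[pr rq].
have r_gt0 : 0 < r by exact: lt_trans p_gt0 pr.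
have dm_gt0 : 0 < dm r.
  have -> : dm r = r^-1 * (derive1 (derive1 h) r - derive1 h r / r).
    by rewrite /dm; field; rewrite gt_eqF.
  by rewrite mulr_gt0 ?invr_gt0 ?subr_gt0 ?dh_div_lt.
by rewrite -subr_gt0 -/(m q) -/(m p) mqp mulr_gt0 ?subr_gt0.
Qed.

Lemma le0_between_zeros (f df : R -> R) (x1 x2 : R) :
  (forall x : R, is_derive x (1:R) f (df x)) -> f x1 = 0 -> f x2 = 0 ->
  (forall p q, x1 < p -> p < q -> q < x2 -> 0 < df p -> df q < 0 -> False) ->
  forall x, x1 <= x -> x <= x2 -> f x <= 0.
Proof.
move=> Df f1 f2 no_sign_change x x1x xx2.
rewrite leNgt; apply/negP => fx_gt0.
have df_ex y : derivable f y 1 by case: (Df y).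
have {}x1x : x1 < x.
  by rewrite lt_neqAle x1x andbT; apply: contraTneq fx_gt0 => <-; rewrite f1 ltxx.
have {}xx2 : x < x2.
  by rewrite lt_neqAle xx2 andbT; apply: contraTneq fx_gt0 => ->; rewrite f2 ltxx.
have [p] := MVT x1x (fun y _ => Df y) (derivable_within_continuous (fun y _ => df_ex y)).
have [q] := MVT xx2 (fun y _ => Df y) (derivable_within_continuous (fun y _ => df_ex y)).
rewrite !in_itv /= => /andP[xq qx2] fq /andP[x1p px] fp.
apply: (no_sign_change p q) => //; first exact: lt_trans px xq.
  have : 0 < df p * (x - x1) by rewrite -fp f1 subr0.
  by rewrite pmulr_lgt0 // subr_gt0.
have : df q * (x2 - x) < 0 by rewrite -fq f2 sub0r oppr_lt0.
by rewrite pmulr_llt0 // subr_gt0.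
Qed.

Lemma sphere_chord_bound (t G : R) : 0 < t -> 0 < G -> even_fun h ->
  forall a, - G <= a -> a <= G ->
  (h (t + G) - h (t - G)) / (2 * G) * a + h (Num.sqrt (t ^+ 2 - 2 * t * a + G ^+ 2))
    <= (h (t + G) + h (t - G)) / 2.
Proof.
move=> t_gt0 G_gt0 heven a aG1 aG2.
set c := (h (t + G) - h (t - G)) / (2 * G).
set val := (h (t + G) + h (t - G)) / 2.
set s := t ^+ 2 - 2 * t * a + G ^+ 2.
have s_ge : (t - G) ^+ 2 <= s by rewrite /s; nra.
have s_le : s <= (t + G) ^+ 2 by rewrite /s; nra.
(* k y^2 - C is the chord of s |-> h (sqrt s) between s = (t -+ G)^2, read at s = y^2 *)
pose k := c / (2 * t).
pose C := k * (t ^+ 2 + G ^+ 2) - val.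
pose psi := h + cst C - k *: ((id : R -> R) * id).
have psiE y : psi y = h y + C - k * (y * y) by [].
have Dpsi y : is_derive y (1:R) psi ('D_1 h y - k * (y + y)).
  have Dh := derivableP (dh y).
  apply: is_derive_eq.
  by rewrite addr0; congr (_ - _); congr (_ * _); rewrite /GRing.scale /= !mulr1.
have : psi (Num.sqrt s) <= 0.
  apply: (@le0_between_zeros psi _ `|t - G| (t + G) Dpsi).
  - rewrite psiE (even_fun_normr heven) -expr2 real_normK ?num_real // /C /k /val /c.
    field; lra.
  - by rewrite psiE /C /k /val /c -expr2; field; lra.
  - move=> p q p1 pq q2; rewrite -!derive1E => dp dq.
    have p_gt0 : 0 < p by apply: le_lt_trans p1.
    have q_gt0 : 0 < q by apply: lt_trans pq.
    have := derive1_div_lt _ _ p_gt0 pq.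
    have : k * 2 < derive1 h p / p by rewrite ltr_pdivlMr //; lra.
    have : derive1 h q / q < k * 2 by rewrite ltr_pdivrMr //; lra.
    lra.
  - by rewrite -(sqrtr_sqr (t - G)) ler_wsqrtr.
  - by rewrite -(ger0_norm (ltW (addr_gt0 t_gt0 G_gt0))) -sqrtr_sqr ler_wsqrtr.
rewrite psiE -expr2 sqr_sqrtr; last by apply: le_trans s_ge; exact: sqr_ge0.
have : C - k * s = c * a - val by rewrite /C /k /s; field; lra.
lra.
Qed.

End SecondDerivativeCondition.

Section InnerProduct.
Context {R : realType} {d : nat}.
Implicit Types (u v w : 'rV[R]_d) (k : R).

Lemma dotvC u v : dotv u v = dotv v u.
Proof. by apply: eq_bigr => i _; rewrite mulrC. Qed.

Lemma dotvDl u v w : dotv (u + v) w = dotv u w + dotv v w.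
Proof. by rewrite /dotv -big_split; apply: eq_bigr => i _; rewrite mxE mulrDl. Qed.

Lemma dotvZl k u w : dotv (k *: u) w = k * dotv u w.
Proof. by rewrite /dotv mulr_sumr; apply: eq_bigr => i _; rewrite mxE mulrA. Qed.

Lemma dotvNl u w : dotv (- u) w = - dotv u w.
Proof. by rewrite -scaleN1r dotvZl mulN1r. Qed.

Lemma dotvDr u v w : dotv w (u + v) = dotv w u + dotv w v.
Proof. by rewrite dotvC dotvDl !(dotvC w). Qed.

Lemma dotvZr k u w : dotv w (k *: u) = k * dotv w u.
Proof. by rewrite dotvC dotvZl dotvC. Qed.

Lemma dotvNr u w : dotv w (- u) = - dotv w u.
Proof. by rewrite dotvC dotvNl dotvC. Qed.

Lemma dotv0l w : dotv 0 w = 0.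
Proof. by rewrite -(scale0r 0) dotvZl mul0r. Qed.

Lemma dotvv_ge0 v : 0 <= dotv v v.
Proof. by apply: sumr_ge0 => i _; rewrite -expr2 sqr_ge0. Qed.

Lemma dotvv_eq0 v : dotv v v = 0 -> v = 0.
Proof.
move=> /eqP; rewrite psumr_eq0; last by move=> i _; rewrite -expr2 sqr_ge0.
move=> /allP vv0; apply/matrixP => i j; rewrite mxE (ord1 i).
by apply/eqP; have := vv0 j (mem_index_enum j); rewrite /= mulf_eq0 orbb.
Qed.

Lemma dotv_unit_sqr_le u v : dotv u u = 1 -> dotv u v ^+ 2 <= dotv v v.
Proof.
move=> uu; have := dotvv_ge0 (v - dotv u v *: u).
rewrite !(dotvDl, dotvDr, dotvNl, dotvNr, dotvZl, dotvZr) uu (dotvC v u).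
nra.
Qed.

Lemma enorm_ge0 v : 0 <= enorm v.
Proof. exact: sqrtr_ge0. Qed.

Lemma enorm_sqr v : enorm v ^+ 2 = dotv v v.
Proof. by rewrite sqr_sqrtr // dotvv_ge0. Qed.

Lemma enorm_eq_sqr v x : 0 <= x -> dotv v v = x ^+ 2 -> enorm v = x.
Proof. by move=> x_ge0 vv; rewrite /enorm vv sqrtr_sqr ger0_norm. Qed.

Lemma enorm0 : enorm (0 : 'rV[R]_d) = 0.
Proof. by apply: enorm_eq_sqr; rewrite // dotv0l expr0n. Qed.

Lemma enorm_eq0 v : enorm v = 0 -> v = 0.
Proof. by move=> nv0; apply: dotvv_eq0; rewrite -enorm_sqr nv0 expr0n. Qed.

Lemma enorm_gt0 v : v != 0 -> 0 < enorm v.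
Proof.
move=> v_neq0; rewrite lt_def enorm_ge0 andbT.
by apply: contraNneq v_neq0 => /enorm_eq0 ->.
Qed.

Lemma enormZ k v : enorm (k *: v) = `|k| * enorm v.
Proof. by rewrite /enorm dotvZl dotvZr mulrA -expr2 sqrtrM ?sqr_ge0 // sqrtr_sqr. Qed.

Lemma enorm_unit u : dotv u u = 1 -> enorm u = 1.
Proof. by move=> uu; rewrite /enorm uu sqrtr1. Qed.

Lemma exists_unit_vec : (0 < d)%N -> exists u, dotv u u = 1.
Proof.
move=> d_gt0; exists (delta_mx 0 (Ordinal d_gt0)).
rewrite /dotv (bigD1 (Ordinal d_gt0)) //= big1 => [|i ni].
  by rewrite !mxE !eqxx mulr1 addr0.
by rewrite !mxE (negbTE ni) andbF mul0r.
Qed.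

Lemma dotv_sqr_dim1 u v : d = 1%N -> dotv u u = 1 -> dotv v v = dotv u v ^+ 2.
Proof.
move=> d1; move: u v; rewrite d1 => u v.
by rewrite /dotv !big_ord1 exprMn !expr2 => ->; rewrite mul1r.
Qed.

End InnerProduct.

Section Game.
Variables (R : realType) (d : nat) (G : R) (theta : 'rV[R]_d) (h : R -> R).
Hypotheses (G_gt0 : 0 < G) (heven : even_fun h) (hconv : convex_fun h)
  (hinc : increasing_on_nonneg h).
Hypothesis hd : d = 1%N \/
  [/\ (1 < d)%N,
      (forall x : R, derivable h x 1),
      (forall x : R, derivable (derive1 h) x 1) &
      (forall x : R, 0 < x -> derive1 h x / x < derive1 (derive1 h) x)].

Let hmono := increasing_on_nonneg_le hinc.

Let t := enorm theta.
Let u := unit_dir theta.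
Let c := (h (t + G) - h (t - G)) / (2 * G).
Let val := (h (t + G) + h (t - G)) / 2.
Let ws := c *: u.

Lemma game_sub_ws w g : game h theta w g = game h theta ws g + dotv (w - ws) g.
Proof. by rewrite /game dotvDl dotvNl; ring. Qed.

Section NonzeroTheta.
Hypothesis theta_neq0 : theta != 0.

Lemma t_gt0 : 0 < t.
Proof. exact: enorm_gt0. Qed.

Lemma thetaE : theta = t *: u.
Proof.
by rewrite /u /unit_dir (negbTE theta_neq0) scalerA mulfV ?scale1r // gt_eqF // t_gt0.
Qed.

Lemma dotv_uu : dotv u u = 1.
Proof.
rewrite /u /unit_dir (negbTE theta_neq0) dotvZl dotvZr -enorm_sqr -/t.
by field; rewrite gt_eqF // t_gt0.
Qed.

Lemma dotv_theta_sub g :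
  dotv (theta - g) (theta - g) = t ^+ 2 - 2 * t * dotv u g + dotv g g.
Proof.
rewrite {1 2}thetaE !(dotvDl, dotvDr, dotvNl, dotvNr, dotvZl, dotvZr) dotv_uu (dotvC g u).
ring.
Qed.

Lemma game_ws_on_axis g : enorm g = G -> `|dotv u g| = G -> game h theta ws g = val.
Proof.
move=> gG; rewrite /game /ws dotvZl; set a := dotv u g.
have G2 : dotv g g = G ^+ 2 by rewrite -enorm_sqr gG.
move/eqP; rewrite eqr_norml => /andP[/orP[]/eqP aG _].
  have -> : enorm (theta - g) = `|t - G|.
    apply: enorm_eq_sqr; first exact: normr_ge0.
    by rewrite dotv_theta_sub -/a G2 aG real_normK ?num_real //; ring.
  by rewrite (even_fun_normr heven) aG /c /val; field; rewrite gt_eqF.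
have -> : enorm (theta - g) = t + G.
  apply: enorm_eq_sqr; first by rewrite ltW // addr_gt0 // t_gt0.
  by rewrite dotv_theta_sub -/a G2 aG; ring.
by rewrite aG /c /val; field; rewrite gt_eqF.
Qed.

Lemma game_ws_le_val_neq0 g : enorm g <= G -> game h theta ws g <= val.
Proof.
move=> gG; rewrite /game /ws dotvZl; set a := dotv u g.
have gg_le : dotv g g <= G ^+ 2 by rewrite -enorm_sqr; have := enorm_ge0 g; nra.
have a2 : a ^+ 2 <= G ^+ 2 by apply: le_trans gg_le; exact: dotv_unit_sqr_le dotv_uu.
have /andP[aG1 aG2] : - G <= a <= G.
  rewrite -ler_norml -ler_sqr ?nnegrE ?normr_ge0 ?(ltW G_gt0) //.
  by rewrite real_normK ?num_real.
case: hd => [d1 | [_ dh ddh dh_div_lt]].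
  have theta_g : enorm (theta - g) = `|t - a|.
    apply: enorm_eq_sqr; first exact: normr_ge0.
    by rewrite dotv_theta_sub (dotv_sqr_dim1 u g d1 dotv_uu) -/a real_normK ?num_real //; ring.
  rewrite theta_g (even_fun_normr heven).
  have G_pos := G_gt0.
  have : h (t - a) <= val - c * a.
    rewrite (_ : val - c * a = ((t + G - (t - a)) * h (t - G) +
      (t - a - (t - G)) * h (t + G)) / (t + G - (t - G))); last first.
      by rewrite /val /c; field; rewrite !gt_eqF //; lra.
    by apply: (convex_fun_le_chord hconv); lra.
  lra.
apply: le_trans (sphere_chord_bound dh ddh dh_div_lt _ _ t_gt0 G_gt0 heven _ aG1 aG2).
rewrite lerD2l hmono ?enorm_ge0 // /enorm dotv_theta_sub ler_wsqrtr //.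
by rewrite lerD2l.
Qed.

Lemma game_gt_axis w : dotv (w - ws) u != 0 ->
  exists2 g, enorm g <= G & val < game h theta w g.
Proof.
set p := dotv (w - ws) u => p_neq0.
set s := if 0 < p then G else - G.
have sG : `|s| = G by rewrite /s; case: ifP; rewrite ?normrN gtr0_norm.
have su : enorm (s *: u) = G by rewrite enormZ enorm_unit ?dotv_uu ?mulr1.
exists (s *: u); first by rewrite su.
rewrite game_sub_ws game_ws_on_axis // ?dotvZr ?dotv_uu ?mulr1 // ltrDl -/p /s.
case: ifP => [|/negbT]; first exact: mulr_gt0.
by rewrite mulNr oppr_gt0 pmulr_rlt0 // -leNgt le_eqVlt (negbTE p_neq0).
Qed.

Lemma game_gt_tilt w : w != ws -> dotv (w - ws) u = 0 ->
  exists2 g, enorm g <= G & val < game h theta w g.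
Proof.
rewrite -subr_eq0; set v := w - ws => v_neq0 vu0.
set nv := enorm v; have nv_gt0 : 0 < nv by exact: enorm_gt0.
set vh := nv^-1 *: v.
have vhvh : dotv vh vh = 1 by rewrite dotvZl dotvZr -enorm_sqr -/nv; field; rewrite gt_eqF.
have uvh : dotv u vh = 0 by rewrite dotvZr dotvC vu0 mulr0.
have vvh : dotv v vh = nv by rewrite dotvZr -enorm_sqr -/nv; field; rewrite gt_eqF.
clearbody vh.
set L := h (`|t - G| + 1) - h `|t - G|.
have L_ge0 : 0 <= L by rewrite subr_ge0 hmono ?normr_ge0 ?lerDl.
have [e /andP[e_gt0 e_leG]] := @sqrt_gap_dominates_linear R G nv (c + L) G_gt0 nv_gt0.
set a := G - e; set b := Num.sqrt _ => Ke.
have b2 : b ^+ 2 = G ^+ 2 - a ^+ 2 by rewrite sqr_sqrtr // /a; nra.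
set g := a *: u + b *: vh.
have ug : dotv u g = a by rewrite /g dotvDr !dotvZr dotv_uu uvh; ring.
have vg : dotv v g = b * nv by rewrite /g dotvDr !dotvZr vu0 vvh; ring.
have gG : enorm g = G.
  apply: enorm_eq_sqr; first exact: ltW.
  rewrite /g !(dotvDl, dotvDr, dotvZl, dotvZr) dotv_uu vhvh uvh (dotvC vh u) uvh.
  by rewrite -[G ^+ 2](subrK (a ^+ 2)) -b2; ring.
exists g; first by rewrite gG.
have theta_g : `|t - a| <= enorm (theta - g).
  rewrite -sqrtr_sqr /enorm ler_wsqrtr // dotv_theta_sub ug -enorm_sqr gG /a; nra.
have dist : `| `|t - G| - `|t - a| | <= e.
  apply: le_trans (ler_dist_dist _ _) _.
  by rewrite (_ : t - G - (t - a) = - e) ?normrN ?gtr0_norm // /a; ring.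
have h_lower : h (t - G) - L * e <= h (enorm (theta - g)).
  have := convex_fun_ge_secant hconv hinc _ _ (normr_ge0 (t - G)) (normr_ge0 (t - a)).
  rewrite -/L (even_fun_normr heven) => secant.
  apply: le_trans (hmono _ _ (normr_ge0 _) theta_g).
  by have := ler_wpM2l L_ge0 dist; lra.
have val_end : c * G + h (t - G) = val by rewrite /c /val; field; rewrite gt_eqF.
rewrite game_sub_ws -/v vg /game /ws dotvZl ug /a.
lra.
Qed.

End NonzeroTheta.

Section ZeroTheta.
Hypothesis theta0 : theta = 0.

Lemma ws0 : ws = 0.
Proof. by rewrite /ws /u /unit_dir theta0 eqxx scaler0. Qed.

Lemma val0 : val = h G.
Proof. by rewrite /val /t theta0 enorm0 add0r sub0r heven; field. Qed.

Lemma game_theta0 w g : game h theta w g = dotv w g + h (enorm g).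
Proof. by rewrite /game theta0 sub0r /enorm dotvNl dotvNr opprK. Qed.

End ZeroTheta.

Lemma game_ws_le_val g : enorm g <= G -> game h theta ws g <= val.
Proof.
have [theta0 gG|theta_neq0] := eqVneq theta 0; last exact: game_ws_le_val_neq0.
by rewrite game_theta0 // ws0 // dotv0l add0r val0 // hmono // enorm_ge0.
Qed.

Lemma game_ws_maximizer gs : `|dotv theta gs| = G * t -> enorm gs = G ->
  game h theta ws gs = val.
Proof.
have [theta0 _ gsG|theta_neq0] := eqVneq theta 0.
  by rewrite game_theta0 // ws0 // dotv0l add0r gsG val0.
have t_neq0 : t != 0 by rewrite gt_eqF // t_gt0.
rewrite {1}thetaE // dotvZl normrM (gtr0_norm (t_gt0 theta_neq0)) mulrC.
by move=> /(mulIf t_neq0) ugs gsG; exact: game_ws_on_axis.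
Qed.

Lemma exists_maximizer : (0 < d)%N ->
  exists gs, `|dotv theta gs| = G * t /\ enorm gs = G.
Proof.
move=> d_gt0; have [theta0|theta_neq0] := eqVneq theta 0.
  have [e ee] := @exists_unit_vec R d d_gt0.
  exists (G *: e); rewrite enormZ enorm_unit // mulr1 (gtr0_norm G_gt0).
  by rewrite /t theta0 dotv0l normr0 enorm0 mulr0.
exists (G *: u); rewrite enormZ enorm_unit ?dotv_uu // mulr1 (gtr0_norm G_gt0).
rewrite {1}thetaE // dotvZl dotvZr dotv_uu // mulr1 normrM.
by rewrite !gtr0_norm ?t_gt0 // mulrC.
Qed.

Lemma game_gt_of_neq w : w != ws -> exists2 g, enorm g <= G & val < game h theta w g.
Proof.
have [theta0|theta_neq0 w_neq] := eqVneq theta 0; last first.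
  have [vu0|vu_neq0] := eqVneq (dotv (w - ws) u) 0.
    exact: game_gt_tilt.
  exact: game_gt_axis.
rewrite ws0 // => w_neq0; set nw := enorm w.
have nw_gt0 : 0 < nw by exact: enorm_gt0.
have gG : enorm ((G / nw) *: w) = G.
  by rewrite enormZ gtr0_norm ?divr_gt0 // mulfVK ?gt_eqF.
exists ((G / nw) *: w); first by rewrite gG.
rewrite game_theta0 // gG val0 // ltrDr dotvZr -enorm_sqr -/nw.
by rewrite mulr_gt0 ?divr_gt0 ?exprn_gt0.
Qed.

End Game.

Theorem lemma8 (R : realType) (d : nat) (G : R) (theta : 'rV[R]_d) (h : R -> R)
  (hG : 0 < G) (heven : even_fun h) (hconv : convex_fun h)
  (hinc : increasing_on_nonneg h)
  (hd : d = 1%N \/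
        [/\ (1 < d)%N,
            (forall x : R, derivable h x 1),
            (forall x : R, derivable (derive1 h) x 1) &
            (forall x : R, 0 < x -> derive1 h x / x < derive1 (derive1 h) x)]) :
  let val := (h (enorm theta + G) + h (enorm theta - G)) / 2 in
  let wstar := ((h (enorm theta + G) - h (enorm theta - G)) / (2 * G)) *: unit_dir theta in
  [/\ (* max_g H(w*, g) <= val *)
      (forall g, enorm g <= G -> game h theta wstar g <= val),
      (* every w has max_g H(w, g) >= val, so val = min_w max_g H and w* attains it *)
      (forall w, exists2 g, enorm g <= G & val <= game h theta w g),
      (* w* is the unique minimizer *)
      (forall w, w != wstar -> exists2 g, enorm g <= G & val < game h theta w g) &
      (* any such g* is a maximizer of H(w*, .) over the ball *)
      (forall gs, `|dotv theta gs| = G * enorm theta -> enorm gs = G ->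
         forall g, enorm g <= G -> game h theta wstar g <= game h theta wstar gs)].
Proof.
move=> val wstar.
have d_gt0 : (0 < d)%N by case: hd => [-> | [/ltnW]].
have wstar_le g : enorm g <= G -> game h theta wstar g <= val.
  by apply: game_ws_le_val.
have wstar_eq gs : `|dotv theta gs| = G * enorm theta -> enorm gs = G ->
    game h theta wstar gs = val.
  by apply: game_ws_maximizer.
have beats w : w != wstar -> exists2 g, enorm g <= G & val < game h theta w g.
  by apply: game_gt_of_neq.
split => //.
- move=> w; have [->|/beats[g gG /ltW]] := eqVneq w wstar; last by exists g.
  have [gs [theta_gs gsG]] := exists_maximizer R d G theta hG d_gt0.
  by exists gs; rewrite ?gsG ?wstar_eq.
- by move=> gs theta_gs gsG g gG; rewrite (wstar_eq gs) //; exact: wstar_le.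
Qed.
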